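(* Let $I\subset K[x,y]$ be a monomial ideal. Then the following are equivalent: (1) $I$ satisfies the non-pure dual exchange property; (2) $I$ satisfies the non-pure exchange property; (3) $I$ is componentwise polymatroidal.
   Context: For a monomial $u$, $\deg_{x_i}(u)$ is the exponent of the variable $x_i$ in $u$; $G(I)$ is the minimal monomial generating set. A monomial ideal generated in a single degree is polymatroidal if for all $u,v\in G(I)$ and all $i$ with $\deg_{x_i}(u)>\deg_{x_i}(v)$ there exists $j$ with $\deg_{x_j}(u)<\deg_{x_j}(v)$ and $x_j(u/x_i)\in I$. $I_{\langle j\rangle}$ denotes the ideal generated by all monomials of degree $j$ in $I$; $I$ is componentwise polymatroidal if every nonzero $I_{\langle j\rangle}$ is polymatroidal. $I$ satisfies the non-pure exchange property if for all $u,v \in G(I)$ with $\deg(u)\leq \deg(v)$ and all $i$ with $\deg_{x_i}(v) > \deg_{x_i}(u)$, there exists $j$ with $\deg_{x_j}(v)< \deg_{x_j}(u)$ and $x_j(v/x_i) \in I$. $I$ satisfies the non-pure dual exchange property if for all $u,v \in G(I)$ with $\deg(u) \leq \deg(v)$ and all $i$ with $\deg_{x_i}(v) < \deg_{x_i}(u)$, there exists $j$ with $\deg_{x_j}(v) > \deg_{x_j}(u)$ and $x_i(v/x_j) \in I$. *)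

From mathcomp Require Import all_boot all_algebra.
From mathcomp Require Import mpoly.

Set Implicit Arguments.
Unset Strict Implicit.
Unset Printing Implicit Defensive.

Import GRing.Theory.
Local Open Scope ring_scope.

Section MonomialIdeals.
Variables (K : fieldType) (n : nat).

Definition is_ideal (I : {mpoly K[n]} -> Prop) : Prop :=
  [/\ I 0,
      (forall p q, I p -> I q -> I (p + q)) &
      (forall p q, I q -> I (p * q))].

(* ... generated by monomials: p is in I iff all monomials of its support are. *)
Definition is_monomial_ideal (I : {mpoly K[n]} -> Prop) : Prop :=
  is_ideal I /\ (forall p m, I p -> m \in msupp p -> I 'X_[m]).

Definition mingen (I : {mpoly K[n]} -> Prop) (u : 'X_{1..n}) : Prop :=
  I 'X_[u] /\ (forall w : 'X_{1..n}, I 'X_[w] -> (w <= u)%MM -> w = u).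

(* exponent vector of x_j (u / x_i)  (used only when u i > 0) *)
Definition exch (u : 'X_{1..n}) (i j : 'I_n) : 'X_{1..n} :=
  (u - U_(i) + U_(j))%MM.

(* I_<j>: the ideal generated by the monomials of degree j in I
   (described by its monomial support). *)
Definition degcomp (I : {mpoly K[n]} -> Prop) (d : nat) : {mpoly K[n]} -> Prop :=
  fun p => forall m, m \in msupp p ->
    exists w : 'X_{1..n}, [/\ I 'X_[w], mdeg w = d & (w <= m)%MM].

Definition polymatroidal (I : {mpoly K[n]} -> Prop) : Prop :=
  (exists d, forall u, mingen I u -> mdeg u = d) /\
  (forall u v (i : 'I_n), mingen I u -> mingen I v -> (v i < u i)%N ->
     exists j : 'I_n, (u j < v j)%N /\ I 'X_[exch u i j]).

Definition componentwise_polymatroidal (I : {mpoly K[n]} -> Prop) : Prop :=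
  forall d : nat, (exists p, degcomp I d p /\ p != 0) -> polymatroidal (degcomp I d).

Definition nonpure_exchange (I : {mpoly K[n]} -> Prop) : Prop :=
  forall u v (i : 'I_n), mingen I u -> mingen I v -> (mdeg u <= mdeg v)%N ->
    (u i < v i)%N ->
    exists j : 'I_n, (v j < u j)%N /\ I 'X_[exch v i j].

Definition nonpure_dual_exchange (I : {mpoly K[n]} -> Prop) : Prop :=
  forall u v (i : 'I_n), mingen I u -> mingen I v -> (mdeg u <= mdeg v)%N ->
    (v i < u i)%N ->
    exists j : 'I_n, (u j < v j)%N /\ I 'X_[exch v j i].

End MonomialIdeals.

From mathcomp Require Import all_boot all_algebra.
From mathcomp Require Import mpoly.
From mathcomp Require Import zify.
From Stdlib Require Import Classical FunctionalExtensionality.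

Set Implicit Arguments.
Unset Strict Implicit.
Unset Printing Implicit Defensive.

(* Such an ideal is determined by the upward-closed set S of exponents (a, b)
   with x^a y^b in I, and its minimal generators are the minimal points of S.
   Read in the coordinates (x_i, x_i') for either choice i of the first
   variable, the three properties become the following conditions on S:
     ne_half: for minimal u, v with |u| <= |v| and u_0 < v_0, (v_0-1, v_1+1) in S;
     nd_half: the same conclusion under the hypothesis v_1 < u_1 instead;
     cp_half: for (a, b), (c, e) in S of equal degree with c < a,
              (a-1, b+1) in S.
   The first part proves, for an arbitrary upward-closed S, that ne_half and
   nd_half agree (distinct minimal points are incomparable), that cp_half
   implies ne_half (raise u to the degree of v), and that ne_half for S and for
   its transpose imply cp_half (walk between two points of equal degree by
   single exchanges). *)

Section UpperSets.
Variable S : nat -> nat -> Prop.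

Definition upward_closed : Prop :=
  forall a b a' b', S a b -> a <= a' -> b <= b' -> S a' b'.

Definition minimal (a b : nat) : Prop :=
  S a b /\ forall x y, S x y -> x <= a -> y <= b -> x = a /\ y = b.

Definition ne_half : Prop :=
  forall u0 u1 v0 v1, minimal u0 u1 -> minimal v0 v1 -> u0 + u1 <= v0 + v1 ->
    u0 < v0 -> S (v0 - 1) (v1 + 1).

Definition nd_half : Prop :=
  forall u0 u1 v0 v1, minimal u0 u1 -> minimal v0 v1 -> u0 + u1 <= v0 + v1 ->
    v1 < u1 -> S (v0 - 1) (v1 + 1).

(* The exchange property of each homogeneous component: the points of S of a
   given degree form an interval, seen from its upper end. *)
Definition cp_half : Prop :=
  forall a b c e, S a b -> S c e -> a + b = c + e -> c < a -> S (a - 1) (b + 1).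

(* Two minimal points are incomparable, so one of them has the larger first
   coordinate exactly when the other has the larger second coordinate. *)
Lemma minimal_ltE u0 u1 v0 v1 :
  minimal u0 u1 -> minimal v0 v1 -> (u0 < v0) = (v1 < u1).
Proof.
move=> [Su minu] [Sv minv]; apply/idP/idP => lt.
- by case: (leqP u1 v1) => // le; have := minv _ _ Su (ltnW lt) le; lia.
- by case: (leqP v0 u0) => // le; have := minu _ _ Sv le (ltnW lt); lia.
Qed.

Lemma ne_half_nd_half : ne_half <-> nd_half.
Proof.
by split=> H u0 u1 v0 v1 mu mv deg; have := H _ _ _ _ mu mv deg;
  rewrite (minimal_ltE mu mv).
Qed.

Lemma minimal_below a b :
  S a b -> exists x y, [/\ minimal x y, x <= a & y <= b].
Proof.
move: {2}(a + b) (leqnn (a + b)) => k; elim: k a b => [|k IH] a b deg Sab.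
  by exists a, b; split=> //; split=> // x y _; lia.
case: (classic (minimal a b)) => [mab | not_min]; first by exists a, b.
have [x [y [Sxy xa yb neq]]] : exists x y,
    [/\ S x y, x <= a, y <= b & ~ (x = a /\ y = b)].
  apply: NNPP => none; apply: not_min; split=> // x y Sxy xa yb.
  by apply: NNPP => neq; apply: none; exists x, y.
have [x' [y' [mxy x'x y'y]]] := IH x y ltac:(lia) Sxy.
by exists x', y'; split=> //; lia.
Qed.

Hypothesis S_up : upward_closed.

(* Lift u inside S to the degree of v and exchange there. *)
Lemma cp_half_ne_half : cp_half -> ne_half.
Proof.
move=> cp u0 u1 v0 v1 [Su _] [Sv _] deg lt.
apply: (cp v0 v1 u0 (u1 + (v0 + v1 - u0 - u1))) => //; last lia.
by apply: (S_up Su); lia.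
Qed.

(* If between any two points of equal degree one of them can be moved one
   step towards the other, then all points between them lie in S. *)
Lemma cp_half_of_steps :
  (forall a b c e, S a b -> S c e -> a + b = c + e -> c < a ->
     S (a - 1) (b + 1) \/ S (c + 1) (e - 1)) -> cp_half.
Proof.
move=> step a b c e; move: {2}(a - c) (erefl (a - c)) => k.
elim: k c e => [|k IH] c e gap Sab Sce deg lt; first lia.
case: (ltnP (c + 1) a) => near.
  have [//|Sce'] := step _ _ _ _ Sab Sce deg lt.
  by apply: (IH (c + 1) (e - 1)) => //; lia.
have -> : a - 1 = c by lia.
by have -> : b + 1 = e by lia.
Qed.

End UpperSets.

Definition transpose (S : nat -> nat -> Prop) : nat -> nat -> Prop :=
  fun a b => S b a.

Lemma minimal_transpose S a b : minimal (transpose S) a b <-> minimal S b a.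
Proof.
by split=> [] [Sab minab]; split=> // x y Sxy xa yb;
  have [-> ->] := minab y x Sxy yb xa.
Qed.

(* The single exchange step: take minimal points g below (a, b) and h below
   (c, e); unless one of them already lies below the desired point, the
   exchange property applied to the one of smaller degree moves the other. *)
Lemma exchange_step S : upward_closed S ->
  ne_half S -> ne_half (transpose S) ->
  forall a b c e, S a b -> S c e -> a + b = c + e -> c < a ->
    S (a - 1) (b + 1) \/ S (c + 1) (e - 1).
Proof.
move=> S_up ne ne_t a b c e Sab Sce deg lt.
have [g0 [g1 [mg ga gb]]] := minimal_below Sab.
have [h0 [h1 [mh hc he]]] := minimal_below Sce.
have [Sg _] := mg; have [Sh _] := mh.
case: (ltnP g0 a) => g0a.
  by left; apply: (S_up _ _ _ _ Sg); lia.
case: (ltnP h1 e) => h1e.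
  by right; apply: (S_up _ _ _ _ Sh); lia.
case: (leqP (h0 + h1) (g0 + g1)) => hg.
- have Sx := ne _ _ _ _ mh mg hg ltac:(lia).
  by left; apply: (S_up _ _ _ _ Sx); lia.
- have Sx : S (h0 + 1) (h1 - 1).
    apply: (ne_t g1 g0 h1 h0); try exact/minimal_transpose; lia.
  by right; apply: (S_up _ _ _ _ Sx); lia.
Qed.

Lemma ne_half_cp_half S : upward_closed S ->
  ne_half S -> ne_half (transpose S) -> cp_half S.
Proof. by move=> S_up ne ne_t; apply: cp_half_of_steps; exact: exchange_step. Qed.

(* In two variables, [other i] is the variable different from i. *)
Definition other (i : 'I_2) : 'I_2 := lift i ord0.

Lemma other_neq (i : 'I_2) : (other i == i) = false.
Proof. by apply/negbTE; rewrite eq_sym neq_lift. Qed.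

Lemma otherK (i : 'I_2) : other (other i) = i.
Proof. by apply: val_inj; case: i => [[|[|k]] lt_k2]. Qed.

Lemma ord2_cases (i j : 'I_2) : j = i \/ j = other i.
Proof. by case: (unliftP i j) => [k ->|->]; [right; rewrite (ord1 k) | left]. Qed.

Definition mk (i : 'I_2) (a b : nat) : 'X_{1..2} :=
  [multinom (if j == i then a else b) | j < 2].

Lemma mk_at i a b : mk i a b i = a.
Proof. by rewrite mnmE eqxx. Qed.

Lemma mk_other i a b : mk i a b (other i) = b.
Proof. by rewrite mnmE other_neq. Qed.

Lemma mk_coords i (m : 'X_{1..2}) : mk i (m i) (m (other i)) = m.
Proof.
by apply/mnmP => j; case: (ord2_cases i j) => ->; rewrite ?mk_at ?mk_other.
Qed.

Lemma mk_swap i a b : mk (other i) a b = mk i b a.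
Proof.
apply/mnmP => j; case: (ord2_cases i j) => ->; last by rewrite mk_at mk_other.
by rewrite mk_at -{2}(otherK i) mk_other.
Qed.

Lemma mdeg_coords i (m : 'X_{1..2}) : mdeg m = m i + m (other i).
Proof.
rewrite mdegE (bigD1 i) //= (big_pred1 (other i)) // => j /=.
by case: (ord2_cases i j) => ->; rewrite ?eqxx ?other_neq // eq_sym other_neq.
Qed.

Lemma lepm_coords i (w m : 'X_{1..2}) :
  (w <= m)%MM <-> w i <= m i /\ w (other i) <= m (other i).
Proof.
split=> [/mnm_lepP le | [le_i le_o]]; first by split; apply: le.
by apply/mnm_lepP => j; case: (ord2_cases i j) => ->.
Qed.

Lemma exch_coords i (m : 'X_{1..2}) :
  exch m i (other i) = mk i (m i - 1) (m (other i) + 1).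
Proof.
apply/mnmP => j; rewrite /exch mnmDE mnmBE !mnm1E.
case: (ord2_cases i j) => ->; rewrite ?mk_at ?mk_other eqxx ?other_neq.
  by rewrite addn0.
by rewrite eq_sym other_neq subn0.
Qed.

Section MonomialFacts.
Variables (K : fieldType) (n : nat).

Lemma mpolyX_neq0 (m : 'X_{1..n}) : ('X_[m] : {mpoly K[n]}) != 0%R.
Proof. by apply/eqP => X0; have := msuppX K m; rewrite X0 msupp0. Qed.

Lemma lepm_mdeg_eq (w m : 'X_{1..n}) : (w <= m)%MM -> mdeg w = mdeg m -> w = m.
Proof.
move=> le; rewrite -{1}(submK le) mdegD -{1}[mdeg w]add0n => /addIn /esym /eqP.
by rewrite mdeg_eq0 => /eqP m_w0; rewrite -(submK le) m_w0 add0m.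
Qed.

Lemma lepm_anti (w m : 'X_{1..n}) : (w <= m)%MM -> (m <= w)%MM -> w = m.
Proof.
move=> /mnm_lepP wm /mnm_lepP mw; apply/mnmP => k.
by apply/eqP; rewrite eqn_leq wm mw.
Qed.

Variable I : {mpoly K[n]} -> Prop.

Lemma ideal_multiple (w m : 'X_{1..n}) :
  is_ideal I -> I 'X_[w] -> (w <= m)%MM -> I 'X_[m].
Proof.
by case=> _ _ Imul Iw le; rewrite -(submK le) mpolyXD; apply: Imul.
Qed.

Lemma degcomp_X d (m : 'X_{1..n}) :
  degcomp I d 'X_[m] <-> exists w, [/\ I 'X_[w], mdeg w = d & (w <= m)%MM].
Proof.
split=> [|[w Hw] m']; first by apply; rewrite msuppX mem_seq1.
by rewrite msuppX mem_seq1 => /eqP ->; exists w.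
Qed.

Lemma mingen_degcomp d (u : 'X_{1..n}) :
  mingen (degcomp I d) u <-> I 'X_[u] /\ mdeg u = d.
Proof.
split=> [[/degcomp_X [w [Iw dw wu]] minu] | [Iu du]].
  have w_u : w = u.
    by apply: minu => //; apply/degcomp_X; exists w; rewrite lepm_refl.
  by rewrite -w_u.
split; first by apply/degcomp_X; exists u; rewrite lepm_refl.
move=> w /degcomp_X [w' [_ dw' w'w]] wu.
have w'_u : w' = u.
  by apply: lepm_mdeg_eq; [exact: lepm_trans w'w wu | rewrite dw'].
by apply: lepm_anti => //; rewrite -w'_u.
Qed.

End MonomialFacts.

Section TwoVariables.
Variables (K : fieldType) (I : {mpoly K[2]} -> Prop).
Hypothesis I_ideal : is_ideal I.

Definition pts (i : 'I_2) (a b : nat) : Prop := I 'X_[mk i a b].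

Lemma pts_coords i (m : 'X_{1..2}) : pts i (m i) (m (other i)) = I 'X_[m].
Proof. by rewrite /pts mk_coords. Qed.

Lemma pts_upward i : upward_closed (pts i).
Proof.
move=> a b a' b' Iab aa' bb'; apply: (ideal_multiple I_ideal Iab).
by apply/(lepm_coords i); rewrite !mk_at !mk_other.
Qed.

Lemma pts_transpose i : transpose (pts i) = pts (other i).
Proof.
apply: functional_extensionality => a; apply: functional_extensionality => b.
by rewrite /transpose /pts mk_swap.
Qed.

Lemma mingen_pts i (u : 'X_{1..2}) :
  mingen I u <-> minimal (pts i) (u i) (u (other i)).
Proof.
rewrite /minimal pts_coords; split=> [[Iu minu] | [Iu minu]]; split=> //.
- move=> x y Ixy xu yu; have le : (mk i x y <= u)%MM.
    by apply/(lepm_coords i); rewrite mk_at mk_other.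
  by rewrite -(minu _ Ixy le) mk_at mk_other.
- move=> w Iw /(lepm_coords i) [wu wu'].
  have [wi wi'] : w i = u i /\ w (other i) = u (other i).
    by apply: minu; rewrite ?pts_coords.
  by rewrite -(mk_coords i w) wi wi' mk_coords.
Qed.

Lemma minimal_pts i a b : minimal (pts i) a b <-> mingen I (mk i a b).
Proof. by rewrite (mingen_pts i) mk_at mk_other. Qed.

(* In each exchange property of the statement the witness j is forced to be
   the variable other than the one being decreased, so each property splits
   into its two instances, one per choice of the first coordinate. *)
Lemma nonpure_exchange_pts : nonpure_exchange I <-> forall i, ne_half (pts i).
Proof.
split=> [ne i u0 u1 v0 v1 /minimal_pts mu /minimal_pts mv deg lt
        | ne u v i mu mv deg lt].
- have [||j [vu Ij]] := ne _ _ i mu mv;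
    rewrite ?(mdeg_coords i) ?mk_at ?mk_other //.
  case: (ord2_cases i j) vu Ij => ->; rewrite ?mk_at; first lia.
  by rewrite exch_coords !mk_at !mk_other.
- have mui := proj1 (mingen_pts i u) mu; have mvi := proj1 (mingen_pts i v) mv.
  exists (other i); split; first by rewrite -(minimal_ltE mui mvi).
  by rewrite exch_coords; apply: ne mui mvi _ lt; rewrite -!mdeg_coords.
Qed.

Lemma nonpure_dual_exchange_pts :
  nonpure_dual_exchange I <-> forall i, nd_half (pts i).
Proof.
split=> [nd i u0 u1 v0 v1 /minimal_pts mu /minimal_pts mv deg lt
        | nd u v i mu mv deg lt].
- have [||j [uv Ij]] := nd _ _ (other i) mu mv;
    rewrite ?(mdeg_coords i) ?mk_at ?mk_other //.
  case: (ord2_cases (other i) j) uv Ij => ->; rewrite ?mk_other; first lia.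
  by rewrite otherK exch_coords !mk_at !mk_other.
- set o := other i; have io : i = other o by rewrite otherK.
  have muo := proj1 (mingen_pts o u) mu; have mvo := proj1 (mingen_pts o v) mv.
  rewrite -io in muo mvo.
  exists o; split; first by rewrite (minimal_ltE muo mvo).
  rewrite io exch_coords -io; apply: nd muo mvo _ lt.
  by move: deg; rewrite !(mdeg_coords o) -io.
Qed.

(* The generators of I_<d> are the monomials of I of degree d, and I_<a+b>
   is nonzero as soon as x_i^a x_i'^b lies in I. *)
Lemma componentwise_polymatroidal_pts :
  componentwise_polymatroidal I <-> forall i, cp_half (pts i).
Proof.
split=> [cp i a b c e Iab Ice deg lt | cp d _].
- have [_ exchange] : polymatroidal (degcomp I (a + b)).
    apply: cp; exists 'X_[mk i a b]; split; last exact: mpolyX_neq0.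
    apply/degcomp_X; exists (mk i a b).
    by rewrite lepm_refl (mdeg_coords i) mk_at mk_other.
  have [|||j [uv Dj]] := exchange (mk i a b) (mk i c e) i; rewrite ?mk_at //.
  + by apply/mingen_degcomp; rewrite (mdeg_coords i) mk_at mk_other.
  + by apply/mingen_degcomp; rewrite (mdeg_coords i) mk_at mk_other.
  case: (ord2_cases i j) uv Dj => ->; rewrite ?mk_at; first lia.
  move=> _ /degcomp_X [w [Iw _ wle]]; have := ideal_multiple I_ideal Iw wle.
  by rewrite exch_coords !mk_at !mk_other.
- split; first by exists d => u /mingen_degcomp [_ ->].
  move=> u v i /mingen_degcomp [Iu du] /mingen_degcomp [Iv dv] lt.
  have deg : u i + u (other i) = v i + v (other i).
    by rewrite -!mdeg_coords du dv.
  have Iexch : I 'X_[exch u i (other i)].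
    rewrite exch_coords.
    by apply: (cp i _ _ (v i) (v (other i))); rewrite ?pts_coords.
  exists (other i); split; first lia.
  apply/degcomp_X; exists (exch u i (other i)); split=> //; last exact: lepm_refl.
  by rewrite (mdeg_coords i) exch_coords mk_at mk_other -du (mdeg_coords i); lia.
Qed.

End TwoVariables.

Theorem proposition2p5 (K : fieldType) (I : {mpoly K[2]} -> Prop) :
  is_monomial_ideal I ->
  (nonpure_dual_exchange I <-> nonpure_exchange I) /\
  (nonpure_exchange I <-> componentwise_polymatroidal I).
Proof.
move=> [I_ideal _].
rewrite nonpure_dual_exchange_pts nonpure_exchange_pts.
rewrite (componentwise_polymatroidal_pts I_ideal).
split; first by split=> H i; apply/ne_half_nd_half.
split=> H i.
- apply: ne_half_cp_half; [exact: pts_upward | exact: H |].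
  by rewrite pts_transpose.
- by apply: cp_half_ne_half; [exact: pts_upward | exact: H].
Qed.
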